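(* Let $A$ be a finite nonempty subset of $(0,\infty)$ and let $f:A\to[0,\infty)$. Define the discrete Hirsch relation $h_f=\{(f(a)/a,\,a): a\in A\}$. Then $h_f=f$ (i.e. $h_f$ coincides with the graph $\{(a,f(a)):a\in A\}$ of $f$) if and only if $A=\{1\}$ and $f(1)=1$.
   Context: For a function $f$ on a finite set $A\subset(0,\infty)$, the Hirsch function $h_f$ is defined exactly at the points $\theta=f(a)/a$, $a\in A$, and maps $f(a)/a$ to $a$. Equality $h_f=f$ means equality of functions: same domain and same values (equivalently, equality of the graphs as sets of pairs). *)

From HB Require Import structures.
From mathcomp Require Import all_boot all_order all_algebra.
From mathcomp Require Import finmap.
From mathcomp Require Import reals.
Set Implicit Arguments. Unset Strict Implicit. Unset Printing Implicit Defensive.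
Import Order.TTheory GRing.Theory Num.Theory.
Local Open Scope ring_scope.
Local Open Scope fset_scope.

Definition fgraph_on {R : realType} (A : {fset R}) (f : R -> R) : {fset R * R} :=
  [fset (a, f a) | a in A].

Definition hirsch_rel {R : realType} (A : {fset R}) (f : R -> R) : {fset R * R} :=
  [fset (f a / a, a) | a in A].

From HB Require Import structures.
From mathcomp Require Import all_boot all_order all_algebra.
From mathcomp Require Import finmap.
From mathcomp Require Import reals.
Import Order.TTheory GRing.Theory Num.Theory.
Local Open Scope ring_scope.
Local Open Scope fset_scope.

(* If h_f = f, then f a is a point a' of A with f a' / a' = a, and f a / a is a
   point of A mapped by f to a.  Applied to the largest element M and the
   smallest element m of A this gives
     m M <= f M <= 1 <= f m <= M m,
   so f M = f m = 1 = m M, and then M = f (f M) / f M = f 1 = m: the set A is a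
   single point M with M^2 = 1. *)

Lemma fset_max_exists [d] [T : orderType d] [A : {fset T}] :
  A != fset0 -> exists2 M, M \in A & forall a, a \in A -> (a <= M)%O.
Proof.
case/fset0Pn=> x0 x0A; exists (\big[Order.max/x0]_(a <- A) a).
  by rewrite big_seq; elim/big_ind: _ => // x y xA yA; rewrite maxEle; case: ifP.
by move=> a aA; exact: (le_bigmax_seq x0 a predT id aA).
Qed.

Lemma fset_min_exists [d] [T : orderType d] [A : {fset T}] :
  A != fset0 -> exists2 m, m \in A & forall a, a \in A -> (m <= a)%O.
Proof.
case/fset0Pn=> x0 x0A; exists (\big[Order.min/x0]_(a <- A) a).
  by rewrite big_seq; elim/big_ind: _ => // x y xA yA; rewrite minEle; case: ifP.
by move=> a aA; exact: (ge_bigmin_seq x0 a predT id aA).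
Qed.

Section GraphMembership.
Variables (R : realType) (A : {fset R}) (f : R -> R).

Lemma mem_fgraph_on x y : ((x, y) \in fgraph_on A f) = (x \in A) && (y == f x).
Proof.
apply/imfsetP/andP => [[a aA [-> ->]] // | [xA /eqP->]].
by exists x.
Qed.

Lemma mem_hirsch_rel x y :
  ((x, y) \in hirsch_rel A f) = (y \in A) && (x == f y / y).
Proof.
apply/imfsetP/andP => [[a aA [-> ->]] // | [yA /eqP->]].
by exists y.
Qed.

End GraphMembership.

Lemma hirsch_rel_fset1 (R : realType) (f : R -> R) :
  f 1 = 1 -> hirsch_rel [fset 1] f = fgraph_on [fset 1] f.
Proof.
move=> f1; apply/fsetP => -[x y].
rewrite mem_hirsch_rel mem_fgraph_on !inE.
by apply/andP/andP => -[/eqP y1 /eqP x_eq]; subst; rewrite !(f1, divr1, eqxx).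
Qed.

Section HirschFixedGraph.
Variables (R : realType) (A : {fset R}) (f : R -> R).
Hypothesis A_pos : forall a, a \in A -> 0 < a.
Hypothesis hirsch_eq : hirsch_rel A f = fgraph_on A f.

Lemma hirsch_ratio_mem {a} : a \in A -> f a / a \in A /\ f (f a / a) = a.
Proof.
move=> aA; have : (f a / a, a) \in fgraph_on A f.
  by rewrite -hirsch_eq mem_hirsch_rel aA eqxx.
by rewrite mem_fgraph_on => /andP[-> /eqP].
Qed.

Lemma f_mem {a} : a \in A -> f a \in A /\ f (f a) = a * f a.
Proof.
move=> aA; have : (a, f a) \in hirsch_rel A f.
  by rewrite hirsch_eq mem_fgraph_on aA eqxx.
rewrite mem_hirsch_rel => /andP[faA /eqP a_ratio]; split=> //.
by rewrite {2}a_ratio divfK // gt_eqF // A_pos.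
Qed.

Section Extremes.
Context {M m : R}.
Hypotheses (MA : M \in A) (mA : m \in A).
Hypotheses (M_max : forall a, a \in A -> a <= M) (m_min : forall a, a \in A -> m <= a).

Lemma f_max_le1 : f M <= 1.
Proof.
have [fMA ffM] := f_mem MA; have := M_max _ (f_mem fMA).1.
by rewrite ffM -[leRHS]mulr1 ler_pM2l // A_pos.
Qed.

Lemma f_min_ge1 : 1 <= f m.
Proof.
have [fmA ffm] := f_mem mA; have := m_min _ (f_mem fmA).1.
by rewrite ffm -[leLHS]mulr1 ler_pM2l // A_pos.
Qed.

Lemma min_mul_max_le_f_max : m * M <= f M.
Proof. by rewrite -ler_pdivlMr ?A_pos ?m_min ?(hirsch_ratio_mem MA).1. Qed.

Lemma f_min_le_max_mul_min : f m <= M * m.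
Proof. by rewrite -ler_pdivrMr ?A_pos ?M_max ?(hirsch_ratio_mem mA).1. Qed.

Lemma min_mul_max_eq1 : m * M = 1.
Proof.
apply/le_anti; rewrite (le_trans min_mul_max_le_f_max f_max_le1) /=.
by rewrite mulrC (le_trans f_min_ge1 f_min_le_max_mul_min).
Qed.

Lemma f_max_min_eq1 : f M = 1 /\ f m = 1.
Proof.
split; apply/le_anti.
  by rewrite f_max_le1 -min_mul_max_eq1 min_mul_max_le_f_max.
by rewrite f_min_ge1 -min_mul_max_eq1 mulrC f_min_le_max_mul_min.
Qed.

Lemma max_eq_min : M = m.
Proof.
have [fM1 fm1] := f_max_min_eq1.
have [_ ffM] := f_mem MA; have [_ ffm] := f_mem mA.
by rewrite fM1 mulr1 in ffM; rewrite fm1 mulr1 in ffm; rewrite -ffM -ffm.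
Qed.

End Extremes.

Lemma hirsch_fixed_fset1 : A != fset0 -> A = [fset 1] /\ f 1 = 1.
Proof.
move=> A0; have [M MA M_max] := fset_max_exists A0.
have [m mA m_min] := fset_min_exists A0.
have Mm := max_eq_min MA mA M_max m_min; subst m.
have M1 : M = 1.
  have M_ge0 : 0 <= M by exact: ltW (A_pos _ MA).
  apply/eqP; rewrite -(@pexpr_eq1 _ M 2) //.
  by rewrite expr2 (min_mul_max_eq1 MA MA M_max m_min).
have [f1 _] := f_max_min_eq1 MA MA M_max m_min.
split; last by rewrite -{1}M1.
apply/fsetP => a; rewrite inE -M1.
by apply/idP/eqP => [aA | ->] //; apply/le_anti; rewrite M_max ?m_min.
Qed.

End HirschFixedGraph.

Theorem theorem3 (R : realType) (A : {fset R}) (f : R -> R) :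
  A != fset0 ->
  (forall a, a \in A -> 0 < a) ->
  (forall a, a \in A -> 0 <= f a) ->
  (hirsch_rel A f = fgraph_on A f <-> (A = [fset (1 : R)] /\ f 1 = 1)).
Proof.
move=> A0 A_pos _; split=> [hirsch_eq | [-> f1]].
  exact: hirsch_fixed_fset1.
exact: hirsch_rel_fset1.
Qed.
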